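(* Let $\gamma>0$, $\theta\in\mathbb R^d$ and $\mathcal X\subseteq\mathbb R^d$. For $x\in\mathcal X$ and $y\in\{0,1,2,\dots\}$ define $$w_\gamma(x,y,\theta)=\exp\Big[\gamma y\,\theta^\top x-\frac{\gamma}{\gamma+1}\exp\{(\gamma+1)\theta^\top x\}\Big],\qquad S_\gamma(\theta,x,y)=w_\gamma(x,y,\theta)\big[y-\exp\{(\gamma+1)\theta^\top x\}\big]x,$$ and $\Phi_\gamma(x,y,\theta)=\theta^\top S_\gamma(\theta,x,y)$. Then for every fixed $y\in\{0,1,2,\dots\}$, $\sup_{x\in\mathcal X}|\Phi_\gamma(x,y,\theta)|<\infty$.
   Context: $S_\gamma$ is the $\gamma$-estimating score for the Poisson log-linear regression model $p(y|x,\theta)=\frac1{y!}\exp\{y\theta^\top x-\exp(\theta^\top x)\}$, computed with the reference measure having mass $1/y!$ at $y$. *)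

From HB Require Import structures.
From mathcomp Require Import all_boot all_order all_algebra.
From mathcomp Require Import all_classical all_reals all_analysis.
Set Implicit Arguments. Unset Strict Implicit. Unset Printing Implicit Defensive.
Import Order.TTheory GRing.Theory Num.Theory.
Local Open Scope ring_scope.

Definition dotv (R : realType) (d : nat) (u v : 'cV[R]_d) : R := (u^T *m v) 0 0.

Definition w_gamma (R : realType) (d : nat) (gamma : R) (x : 'cV[R]_d) (y : nat)
    (theta : 'cV[R]_d) : R :=
  expR (gamma * y%:R * dotv theta x
        - gamma / (gamma + 1) * expR ((gamma + 1) * dotv theta x)).

Definition S_gamma (R : realType) (d : nat) (gamma : R) (theta x : 'cV[R]_d) (y : nat)
    : 'cV[R]_d :=
  (w_gamma gamma x y theta * (y%:R - expR ((gamma + 1) * dotv theta x))) *: x.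

Definition Phi_gamma (R : realType) (d : nat) (gamma : R) (x : 'cV[R]_d) (y : nat)
    (theta : 'cV[R]_d) : R :=
  dotv theta (S_gamma gamma theta x y).

From mathcomp Require Import all_boot all_order all_algebra.
From mathcomp Require Import all_classical all_reals all_analysis.
From mathcomp Require Import ring lra.
Import Order.TTheory GRing.Theory Num.Theory.
Local Open Scope ring_scope.

(* With a = gamma / (gamma + 1) and s = (gamma + 1) theta^T x, Phi_gamma is
   (gamma + 1)^-1 exp(a y s - a e^s) (y - e^s) s, a function of the real s alone.
   For s <= 0 the weight is at most min(1, e^(a y s)), and u e^-u <= 1 absorbs
   the factor |s|. For s >= 0, with v = e^s >= s, the weight is at most
   v^y e^(-a v) since a <= 1, and v^n e^(-a v) <= (n / a)^n. *)

Lemma exprn_mul_expRN_le {R : realType} (x : R) (n : nat) :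
  0 <= x -> x ^+ n * expR (- x) <= n%:R ^+ n.
Proof.
move=> x0; case: n => [|n].
  by rewrite !expr0 mul1r -expR0 ler_expR oppr_le0.
set m : R := n.+1%:R; have m0 : 0 < m by rewrite ltr0n.
have xm0 : 0 <= x / m by rewrite divr_ge0 // ltW.
have xm_le : x / m <= expR (x / m).
  by apply: le_trans (expR_ge1Dx _); rewrite lerDr.
have : (x / m) ^+ n.+1 <= expR x.
  have -> : expR x = expR (x / m) ^+ n.+1.
    by rewrite -expRM_natl mulrC divfK // lt0r_neq0.
  by rewrite lerXn2r // nnegrE (le_trans xm0 xm_le).
rewrite expr_div_n ler_pdivrMr ?exprn_gt0 // => xn_le.
rewrite -(ler_pM2r (expR_gt0 x)) -mulrA -expRD addNr expR0 mulr1.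
by rewrite mulrC.
Qed.

Definition score_profile {R : realType} (a : R) (y : nat) (s : R) : R :=
  expR (a * y%:R * s - a * expR s) * (y%:R - expR s) * s.

Section ScoreProfile.
Context {R : realType}.
Variables (a : R) (y : nat).
Hypothesis a_gt0 : 0 < a.

Lemma score_profile_norm_le_nonpos (s : R) : s <= 0 ->
  `|score_profile a y s| <= a^-1 + 1.
Proof.
move=> s_le0; rewrite /score_profile.
set v := expR s; set E := expR _; set F := expR (a * y%:R * s).
have v_gt0 : 0 < v := expR_gt0 s.
have E_gt0 : 0 < E := expR_gt0 _.
have ays_ge0 : 0 <= a * y%:R * - s.
  by rewrite mulr_ge0 ?oppr_ge0 // mulr_ge0 // ltW.
have E_le_F : E <= F by rewrite ler_expR lerBlDr lerDl mulr_ge0 // ltW.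
have E_le1 : E <= 1.
  have av_ge0 : 0 <= a * v by rewrite mulr_ge0 // ltW.
  by rewrite -expR0 ler_expR; move: ays_ge0; rewrite mulrN; lra.
have yE_le : y%:R * E * - s <= a^-1.
  have := exprn_mul_expRN_le _ 1 ays_ge0.
  rewrite expr1 expr1n -mulrN opprK -/F => aysF_le1.
  rewrite -(ler_pM2l a_gt0) divff ?lt0r_neq0 //.
  by nra.
have vE_le : v * E * - s <= 1.
  have := @exprn_mul_expRN_le _ (- s) 1; rewrite oppr_ge0 => /(_ s_le0).
  rewrite expr1 expr1n opprK -/v => vs_le1.
  by nra.
have yv_norm : `|y%:R - v| <= y%:R + v.
  by apply: le_trans (ler_normB _ _) _; rewrite !ger0_norm // ltW.
rewrite !normrM ger0_norm ?(ltW E_gt0) // (ler0_norm s_le0).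
have := ler_wpM2l (ltW E_gt0) yv_norm.
nra.
Qed.

Hypothesis a_le1 : a <= 1.

Lemma score_profile_norm_le_nonneg (s : R) : 0 <= s ->
  `|score_profile a y s| <= y.+1%:R * (y.+2%:R / a) ^+ y.+2.
Proof.
move=> s_ge0; rewrite /score_profile.
set v := expR s; set E := expR _; set G := expR (- (a * v)).
have v_ge1 : 1 <= v by rewrite -expR0 ler_expR.
have s_le_v : s <= v by apply: le_trans (expR_ge1Dx s); rewrite lerDr.
have E_le : E <= v ^+ y * G.
  rewrite /G /v -expRM_natl -expRD ler_expR lerB //.
  by rewrite -mulrA ler_piMl ?mulr_ge0.
have yv_le : `|y%:R - v| <= y.+1%:R * v.
  apply: le_trans (ler_normB _ _) _.
  rewrite !ger0_norm ?(le_trans ler01 v_ge1) // -addn1 natrD mulrDl mul1r lerD2r.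
  by rewrite ler_peMr.
have vG_le : v ^+ y.+2 * G <= (y.+2%:R / a) ^+ y.+2.
  have := @exprn_mul_expRN_le _ (a * v) y.+2.
  rewrite mulr_ge0 ?(ltW a_gt0) ?(le_trans ler01 v_ge1) // => /(_ isT) avG_le.
  by rewrite expr_div_n ler_pdivlMr ?exprn_gt0 // mulrC mulrA -exprMn.
rewrite !normrM ger0_norm ?expR_ge0 // (ger0_norm s_ge0).
apply: (@le_trans _ _ (v ^+ y * G * (y.+1%:R * v) * v)).
  by rewrite ler_pM ?mulr_ge0 ?expR_ge0 // ler_pM ?expR_ge0.
have -> : v ^+ y * G * (y.+1%:R * v) * v = y.+1%:R * (v ^+ y.+2 * G).
  by rewrite !exprSr; ring.
by rewrite ler_wpM2l.
Qed.

Lemma score_profile_norm_le (s : R) :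
  `|score_profile a y s| <= a^-1 + 1 + y.+1%:R * (y.+2%:R / a) ^+ y.+2.
Proof.
have a_inv_ge0 : 0 <= a^-1 by rewrite invr_ge0 ltW.
have tail_ge0 : 0 <= y.+1%:R * (y.+2%:R / a) ^+ y.+2 :> R.
  by rewrite mulr_ge0 // exprn_ge0 // divr_ge0 // ltW.
have [s_le0|s_ge0] := lerP s 0.
  by rewrite (le_trans (score_profile_norm_le_nonpos _ s_le0)) // lerDl.
by rewrite (le_trans (score_profile_norm_le_nonneg _ (ltW s_ge0))) // lerDr addr_ge0.
Qed.

End ScoreProfile.

Lemma dotvZr {R : realType} {d : nat} (u v : 'cV[R]_d) (c : R) :
  dotv u (c *: v) = c * dotv u v.
Proof. by rewrite /dotv -scalemxAr mxE. Qed.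

Lemma Phi_gamma_score_profile {R : realType} {d : nat} (gamma : R) (theta x : 'cV[R]_d)
    (y : nat) : gamma + 1 != 0 ->
  Phi_gamma gamma x y theta =
  score_profile (gamma / (gamma + 1)) y ((gamma + 1) * dotv theta x) / (gamma + 1).
Proof.
move=> g1_neq0; rewrite /Phi_gamma /S_gamma /w_gamma /score_profile dotvZr.
set t := dotv theta x.
have -> : gamma / (gamma + 1) * y%:R * ((gamma + 1) * t) = gamma * y%:R * t by field.
by field.
Qed.

Local Open Scope classical_set_scope.

Theorem mainTheorem9 (R : realType) (d : nat) (gamma : R) (theta : 'cV[R]_d)
    (X : set 'cV[R]_d) (hgamma : 0 < gamma) (y : nat) :
  exists M : R, forall x, X x -> `|Phi_gamma gamma x y theta| <= M.
Proof.
have g1_gt0 : 0 < gamma + 1 by rewrite addr_gt0.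
set a := gamma / (gamma + 1).
have a_gt0 : 0 < a by rewrite divr_gt0.
have a_le1 : a <= 1 by rewrite ler_pdivrMr // mul1r lerDl.
exists ((a^-1 + 1 + y.+1%:R * (y.+2%:R / a) ^+ y.+2) / (gamma + 1)) => x _.
rewrite Phi_gamma_score_profile ?lt0r_neq0 // -/a normrM [`|_^-1|]gtr0_norm ?invr_gt0 //.
by rewrite ler_pM2r ?invr_gt0 // score_profile_norm_le.
Qed.
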